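(* Let $p,n\ge1$, let $a_1,\dots,a_n\in\mathbb{C}$ be distinct, let $m_1,\dots,m_n\ge1$ be integers, let $C_0$ and $B_k^{(j)}$ be complex $p\times p$ matrices, let $\|\cdot\|$ be any induced matrix norm, and let $$R(\lambda)=I\lambda-C_0+\sum_{j=1}^n\sum_{k=1}^{m_j}\frac{B_k^{(j)}}{(\lambda-a_j)^k}.$$ If $\lambda_0$ is an eigenvalue of $R(\lambda)$, then $$|\lambda_0|\le\max_{1\le j\le n}\Big\{|a_j|+\cos\Big(\frac{\pi}{m_j+1}\Big),\ \|C_0\|\Big\}+\frac12\left(\sqrt{\sum_{j=1}^n m_j}+\sqrt{\sum_{j=1}^n\sum_{k=1}^{m_j}\|B_k^{(j)}\|^2}\right).$$
   Context: A scalar $\lambda_0\in\mathbb{C}\setminus\{a_1,\dots,a_n\}$ is an eigenvalue of $R(\lambda)$ if there is a nonzero $v\in\mathbb{C}^p$ with $R(\lambda_0)v=0$. *)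

From mathcomp Require Import all_boot all_order all_algebra complex.
From mathcomp Require Import classical_sets reals trigo.
Set Implicit Arguments. Unset Strict Implicit. Unset Printing Implicit Defensive.
Import Order.TTheory GRing.Theory Num.Theory.
Local Open Scope ring_scope.

Definition is_vec_norm (R : realType) (p : nat) (N : 'cV[R[i]]_p -> R) : Prop :=
  [/\ (forall v, 0 <= N v),
      (forall v, N v = 0 -> v = 0),
      (forall (c : R[i]) v, N (c *: v) = Normc.normc c * N v)
    & (forall u v, N (u + v) <= N u + N v)].

Definition induced_norm (R : realType) (p : nat) (N : 'cV[R[i]]_p -> R)
  (A : 'M[R[i]]_p) : R :=
  sup [set N (A *m v) / N v | v in [set v : 'cV[R[i]]_p | v != 0]]%classic.

(* The rational matrix function
   R(l) = I l - C0 + sum_j sum_{k=1}^{m_j} B_k^(j) / (l - a_j)^k,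
   with B j k (k : 'I_(m j)) standing for B_{k+1}^{(j)}. *)
Definition Rfun (R : realType) (p n : nat) (a : 'I_n -> R[i]) (m : 'I_n -> nat)
  (C0 : 'M[R[i]]_p) (B : forall j : 'I_n, 'I_(m j) -> 'M[R[i]]_p) (l : R[i])
  : 'M[R[i]]_p :=
  l%:M - C0 + \sum_(j < n) \sum_(k < m j) ((l - a j) ^- k.+1) *: B j k.

Definition is_eigenvalue (R : realType) (p n : nat) (a : 'I_n -> R[i])
  (m : 'I_n -> nat) (C0 : 'M[R[i]]_p)
  (B : forall j : 'I_n, 'I_(m j) -> 'M[R[i]]_p) (l0 : R[i]) : Prop :=
  (forall j, l0 != a j) /\
  exists v : 'cV[R[i]]_p, v != 0 /\ Rfun a C0 B l0 *m v = 0.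

(* Let R(l0) v = 0 with v <> 0, and put u := N v, d_j := |l0 - a_j| > 0 and
   y_jk := u / d_j^(k+1), so that d_j y_j0 = u and d_j y_j(k+1) = y_jk. Writing
   l0 v = C0 v - sum_jk (l0 - a_j)^-(k+1) B_jk v and taking norms gives
     |l0| u <= ||C0|| u + sum_jk ||B_jk|| y_jk.
   Multiply by u and add |l0| y_jk^2 <= (|a_j| + d_j) y_jk^2 for all j, k: after
   the chain relations are substituted, the right-hand side is a quadratic form
   in u and the y_jk whose cross terms u y_j0, y_jk y_j(k+1) and ||B_jk|| y_jk u
   are split by weighted AM-GM, with weights sqrt(sum_j m_j) / n, 1 and
   1 / sqrt(sum_jk ||B_jk||^2) chosen so that every square ends up with a
   coefficient at most the claimed bound; dividing by u^2 + sum y_jk^2 concludes. The induced norm is a genuine bound for N(Av)/N(v) because N is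
   equivalent to the 1-norm, by compactness of the unit sphere of R^(2p). *)

From mathcomp Require Import all_boot all_order all_algebra complex.
From mathcomp Require Import classical_sets reals trigo.
From mathcomp Require Import boolp topology normedtype derive.
From mathcomp Require Import ring lra.
Set Implicit Arguments.
Unset Strict Implicit.
Unset Printing Implicit Defensive.

Import Order.TTheory GRing.Theory Num.Theory.
Import numFieldNormedType.Exports.
Local Open Scope ring_scope.
Local Open Scope classical_set_scope.

Section QuadraticBounds.
Variable R : realFieldType.

Lemma young_sqr (a x y : R) : 0 < a -> x * y <= a / 2 * x ^+ 2 + a^-1 / 2 * y ^+ 2.
Proof.
move=> a_gt0.
have -> : a / 2 * x ^+ 2 + a^-1 / 2 * y ^+ 2 = x * y + a^-1 / 2 * (a * x - y) ^+ 2.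
  by field; rewrite gt_eqF.
by rewrite lerDl mulr_ge0 ?sqr_ge0 // divr_ge0 // invr_ge0 ltW.
Qed.

Lemma sum_mul_succ_le (y : nat -> R) (M : nat) :
  \sum_(k < M) y k * y k.+1 <=
  \sum_(k < M.+1) y k ^+ 2 - (y 0%N ^+ 2 + y M ^+ 2) / 2.
Proof.
have -> : \sum_(k < M.+1) y k ^+ 2 - (y 0%N ^+ 2 + y M ^+ 2) / 2 =
    \sum_(k < M) (y k ^+ 2 / 2 + y k.+1 ^+ 2 / 2).
  rewrite big_split /= -!mulr_suml.
  have eQl : \sum_(k < M.+1) y k ^+ 2 = y 0%N ^+ 2 + \sum_(k < M) y k.+1 ^+ 2.
    by rewrite big_ord_recl.
  have eQr : \sum_(k < M.+1) y k ^+ 2 = \sum_(k < M) y k ^+ 2 + y M ^+ 2.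
    by rewrite big_ord_recr.
  lra.
apply: ler_sum => k _.
by have := @young_sqr 1 (y k) (y k.+1) ltr01; rewrite invr1; lra.
Qed.

Lemma chain_form_le (m : nat) (y : nat -> R) (u s a kap : R) :
  (0 < m)%N -> 1 <= s -> 0 < a -> a^-1 <= s -> 0 <= kap ->
  ((1 < m)%N -> 2^-1 <= kap) ->
  u * y 0%N + \sum_(k < m.-1) y k * y k.+1 <=
  a / 2 * u ^+ 2 + (s / 2 + kap) * \sum_(k < m) y k ^+ 2.
Proof.
case: m => // M _ s_ge1 a_gt0 a_le_s kap_ge0 kap_half /=.
have head : u * y 0%N <= a / 2 * u ^+ 2 + s / 2 * y 0%N ^+ 2.
  apply: le_trans (@young_sqr a u (y 0%N) a_gt0) _.
  by rewrite lerD2l; apply: ler_wpM2r; [exact: sqr_ge0 | lra].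
case: M => [|M] in kap_half *.
  rewrite big_ord0 addr0 big_ord1; apply: le_trans head _.
  by rewrite mulrDl addrA lerDl mulr_ge0 // sqr_ge0.
have tail := sum_mul_succ_le y M.+1.
set Q := \sum_(k < M.+2) y k ^+ 2 in tail *.
have Q_ge : y 0%N ^+ 2 <= Q.
  by rewrite /Q big_ord_recl lerDl sumr_ge0 // => k _; exact: sqr_ge0.
have sQ : 0 <= (s - 1) * (Q - y 0%N ^+ 2) by rewrite mulr_ge0 // subr_ge0.
have kQ : 0 <= (kap - 2^-1) * Q.
  by rewrite mulr_ge0 ?subr_ge0 ?kap_half // (le_trans (sqr_ge0 _) Q_ge).
have := sqr_ge0 (y M.+1); nra.
Qed.

Lemma block_form_le (m : nat) (y : nat -> R) (r alpha d u s a kap : R) :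
  (0 < m)%N -> 1 <= s -> 0 < a -> a^-1 <= s -> 0 <= kap ->
  ((1 < m)%N -> 2^-1 <= kap) -> r <= alpha + d ->
  d * y 0%N = u -> (forall k, d * y k.+1 = y k) ->
  r * \sum_(k < m) y k ^+ 2 <=
  a / 2 * u ^+ 2 + (alpha + s / 2 + kap) * \sum_(k < m) y k ^+ 2.
Proof.
move=> m_gt0 s_ge1 a_gt0 a_le_s kap_ge0 kap_half r_le dy0 dyS.
have shift : d * \sum_(k < m) y k ^+ 2 = u * y 0%N + \sum_(k < m.-1) y k * y k.+1.
  case: m m_gt0 {kap_half} => // M _; rewrite big_ord_recl mulrDr mulr_sumr /=.
  rewrite expr2 mulrA dy0; congr (_ + _); apply: eq_bigr => k _.
  by rewrite /bump /= add1n expr2 mulrA dyS mulrC.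
have Y_ge0 : 0 <= \sum_(k < m) y k ^+ 2 by apply: sumr_ge0 => k _; exact: sqr_ge0.
apply: le_trans (ler_wpM2r Y_ge0 r_le) _.
rewrite mulrDl shift.
have := @chain_form_le m y u s a kap m_gt0 s_ge1 a_gt0 a_le_s kap_ge0 kap_half; lra.
Qed.

End QuadraticBounds.

Section BlockSums.
Variables (R : rcfType) (n : nat) (m : 'I_n -> nat).

Lemma cross_term_le (b : forall j, 'I_(m j) -> R) (y : 'I_n -> nat -> R) (u : R) :
  \sum_j \sum_(k < m j) b j k * y j k * u <=
  Num.sqrt (\sum_j \sum_(k < m j) b j k ^+ 2) / 2 *
    (u ^+ 2 + \sum_j \sum_(k < m j) y j k ^+ 2).
Proof.
set B2 := \sum_j \sum_(k < m j) b j k ^+ 2; set beta := Num.sqrt B2.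
have B2_ge0 : 0 <= B2 by do 2!(apply: sumr_ge0 => ? _); exact: sqr_ge0.
have [beta0|beta_neq0] := eqVneq beta 0.
  have b0 j k : b j k = 0.
    move: beta0 => /eqP; rewrite sqrtr_eq0 -/B2 => B2_le0.
    have /eqP : B2 = 0 by apply/eqP; rewrite eq_le B2_le0 B2_ge0.
    rewrite psumr_eq0 => [/allP/(_ j (mem_index_enum _))|]; last first.
      by move=> i _; apply: sumr_ge0 => l _; exact: sqr_ge0.
    rewrite psumr_eq0 => [/allP/(_ k (mem_index_enum _))|]; last first.
      by move=> l _; exact: sqr_ge0.
    by rewrite sqrf_eq0 => /eqP.
  rewrite beta0 !mul0r big1 // => j _; rewrite big1 // => k _.
  by rewrite b0 !mul0r.
have beta_gt0 : 0 < beta by rewrite lt_neqAle eq_sym beta_neq0 sqrtr_ge0.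
have -> : beta / 2 * (u ^+ 2 + \sum_j \sum_(k < m j) y j k ^+ 2) =
    \sum_j \sum_(k < m j)
      (beta^-1 / 2 * (b j k * u) ^+ 2 + beta / 2 * y j k ^+ 2).
  rewrite mulrDr.
  have -> : beta / 2 * u ^+ 2 = beta^-1 / 2 * u ^+ 2 * B2.
    by rewrite -(sqr_sqrtr B2_ge0) -/beta; field; rewrite gt_eqF.
  rewrite /B2 !mulr_sumr -big_split; apply: eq_bigr => j _ /=.
  rewrite !mulr_sumr -big_split; apply: eq_bigr => k _ /=.
  by rewrite exprMn; ring.
apply: ler_sum => j _; apply: ler_sum => k _.
have := @young_sqr _ beta^-1 (b j k * u) (y j k); rewrite invrK invr_gt0.
by move=> /(_ beta_gt0); rewrite mulrAC.
Qed.

Lemma sum_block_forms_le (y : 'I_n -> nat -> R) (r u s T : R)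
    (alpha d kap : 'I_n -> R) :
  (0 < n)%N -> 1 <= s -> n%:R <= s ^+ 2 ->
  (forall j, (0 < m j)%N) -> (forall j, 0 <= kap j) ->
  (forall j, (1 < m j)%N -> 2^-1 <= kap j) ->
  (forall j, alpha j + kap j <= T) -> (forall j, r <= alpha j + d j) ->
  (forall j, d j * y j 0%N = u) -> (forall j k, d j * y j k.+1 = y j k) ->
  r * \sum_j \sum_(k < m j) y j k ^+ 2 <=
  s / 2 * u ^+ 2 + (T + s / 2) * \sum_j \sum_(k < m j) y j k ^+ 2.
Proof.
move=> n_gt0 s_ge1 n_le m_gt0 kap_ge0 kap_half kap_le r_le dy0 dyS.
have n_gt0R : 0 < n%:R :> R by rewrite ltr0n.
pose a := s / n%:R.
have a_gt0 : 0 < a by rewrite divr_gt0 // (lt_le_trans ltr01).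
have a_le_s : a^-1 <= s.
  by rewrite invf_div ler_pdivrMr ?(lt_le_trans ltr01) // -expr2.
have -> : s / 2 * u ^+ 2 = \sum_(j < n) a / 2 * u ^+ 2.
  by rewrite sumr_const card_ord -mulr_natl /a; field; rewrite gt_eqF.
rewrite !mulr_sumr -big_split; apply: ler_sum => j _ /=.
have Y_ge0 : 0 <= \sum_(k < m j) y j k ^+ 2.
  by apply: sumr_ge0 => k _; exact: sqr_ge0.
have := block_form_le (m_gt0 j) s_ge1 a_gt0 a_le_s (kap_ge0 j) (kap_half j)
  (r_le j) (dy0 j) (dyS j).
have := ler_wpM2r Y_ge0 (kap_le j); lra.
Qed.

Lemma resolvent_ineq_bound (b : forall j, 'I_(m j) -> R) (r c u T : R)
    (alpha d kap : 'I_n -> R) :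
  (0 < n)%N -> (forall j, (0 < m j)%N) -> 0 < u -> (forall j, 0 < d j) ->
  (forall j, r <= alpha j + d j) -> (forall j, 0 <= kap j) ->
  (forall j, (1 < m j)%N -> 2^-1 <= kap j) ->
  c <= T -> (forall j, alpha j + kap j <= T) ->
  r * u <= c * u + \sum_j \sum_(k < m j) b j k * (u / d j ^+ k.+1) ->
  r <= T + 2^-1 * (Num.sqrt (\sum_j m j)%N%:R
                   + Num.sqrt (\sum_j \sum_(k < m j) b j k ^+ 2)).
Proof.
move=> n_gt0 m_gt0 u_gt0 d_gt0 r_le kap_ge0 kap_half c_le kap_le hyp.
pose y j k := u / d j ^+ k.+1.
set s := Num.sqrt _; set beta := Num.sqrt _.
have M_ge : n%:R <= (\sum_j m j)%N%:R :> R.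
  by rewrite ler_nat -{1}[n]card_ord -sum1_card leq_sum.
have n_le : n%:R <= s ^+ 2 by rewrite sqr_sqrtr.
have s_ge1 : 1 <= s by rewrite -sqrtr1 ler_sqrt // (le_trans _ M_ge) // ler1n.
have dy0 j : d j * y j 0%N = u by rewrite /y expr1 mulrCA divff ?mulr1 // gt_eqF.
have dyS j k : d j * y j k.+1 = y j k.
  by rewrite /y exprS; field; rewrite expf_neq0 ?gt_eqF.
have blocks := sum_block_forms_le n_gt0 s_ge1 n_le m_gt0 kap_ge0 kap_half kap_le r_le dy0 dyS.
have cross := cross_term_le b y u; rewrite -/beta in cross.
set Y := \sum_j \sum_(k < m j) y j k ^+ 2 in blocks cross.
set X := \sum_j \sum_(k < m j) b j k * y j k * u in cross.
have lin : r * u ^+ 2 <= c * u ^+ 2 + X.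
  have -> : X = (\sum_j \sum_(k < m j) b j k * (u / d j ^+ k.+1)) * u.
    by rewrite mulr_suml; apply: eq_bigr => j _; rewrite mulr_suml.
  by rewrite expr2 !mulrA -mulrDl ler_wpM2r // ltW.
have Y_ge0 : 0 <= Y by do 2!(apply: sumr_ge0 => ? _); exact: sqr_ge0.
have uY_gt0 : 0 < u ^+ 2 + Y by rewrite ltr_pwDl // exprn_gt0.
have cT : c * u ^+ 2 <= T * u ^+ 2 by rewrite ler_wpM2r // sqr_ge0.
rewrite -(ler_pM2r uY_gt0); lra.
Qed.

End BlockSums.

Lemma klipschitz_continuous (R : realFieldType) (V W : normedModType R) (k : R)
    (f : V -> W) :
  k.-lipschitz f -> continuous f.
Proof.
move=> f_lip x; apply/cvgrPdist_lt => e e_gt0.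
have k1_gt0 : 0 < `|k| + 1 by rewrite ltr_wpDl.
near=> y.
apply: le_lt_trans (f_lip (x, y) (conj I I)) _ => /=.
apply: (@le_lt_trans _ _ ((`|k| + 1) * `|x - y|)).
  by rewrite ler_wpM2r // (le_trans (ler_norm k)) // lerDl.
rewrite -ltr_pdivlMl //.
near: y; apply: cvgr_dist_lt; first exact: cvg_id.
by rewrite mulr_gt0 ?invr_gt0.
Unshelve. all: by end_near.
Qed.

Lemma normr_entry_le (K : realDomainType) m n (x : 'M[K]_(m, n)) i j :
  `|x i j| <= `|x|.
Proof.
rewrite [leRHS]/Num.norm /= mx_normrE; apply/bigmax_geP; right => /=.
by exists (i, j).
Qed.

Section UnitSphere.
Variables (R : realType) (k : nat).

Lemma rV_unit_sphere_compact : compact [set x : 'rV[R]_k | `|x| = 1].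
Proof.
apply: bounded_closed_compact.
  by exists 1; split; rewrite ?num_real // => M M_gt1 x /= ->; exact: ltW.
apply: (@preimage_closed _ _ (fun x : 'rV[R]_k => `|x|) [set 1]); last exact: closed_eq.
by move=> x _; exact: norm_continuous.
Qed.

Lemma rV_unit_sphere_neq0 : (0 < k)%N -> [set x : 'rV[R]_k | `|x| = 1] !=set0.
Proof.
move=> k_gt0; pose x : 'rV[R]_k := const_mx 1.
have x_neq0 : `|x| != 0.
  rewrite normr_eq0; apply/eqP => /matrixP /(_ 0 (Ordinal k_gt0)).
  by rewrite !mxE => /eqP; rewrite oner_eq0.
exists (`|x|^-1 *: x) => /=.
by rewrite normrZ normrV ?unitfE // normr_id mulVf.
Qed.

End UnitSphere.

Local Open Scope complex_scope.

Section ComplexModulus.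
Variable R : rcfType.

Lemma normc_ge0 (z : R[i]) : 0 <= Normc.normc z.
Proof. by case: z => x y; exact: sqrtr_ge0. Qed.

Lemma normc_real (t : R) : Normc.normc t%:C = `|t|.
Proof. by rewrite /= expr0n /= addr0 sqrtr_sqr. Qed.

Lemma normc_le_Re_Im (x y : R) : Normc.normc (x +i* y) <= `|x| + `|y|.
Proof.
have -> : x +i* y = x%:C + (0 +i* y) by rewrite -[RHS]/((x + 0) +i* (0 + y)) addr0 add0r.
apply: le_trans (le_normcD _ _) _.
by rewrite normc_real /= expr0n /= add0r sqrtr_sqr.
Qed.

Lemma normcX (z : R[i]) n : Normc.normc (z ^+ n) = Normc.normc z ^+ n.
Proof.
elim: n => [|n IHn]; first by rewrite !expr0 Normc.normc1.
by rewrite !exprS Normc.normcM IHn.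
Qed.

Lemma ler_normc_sum (I : Type) (r : seq I) (P : pred I) (F : I -> R[i]) :
  Normc.normc (\sum_(i <- r | P i) F i) <= \sum_(i <- r | P i) Normc.normc (F i).
Proof.
elim/big_ind2: _ => [|x1 x2 y1 y2 le1 le2|//]; first by rewrite Normc.normc0.
exact: le_trans (le_normcD _ _) (lerD le1 le2).
Qed.

End ComplexModulus.

Section OneNorm.
Variables (R : rcfType) (p : nat).

Definition norm1 (v : 'cV[R[i]]_p) : R := \sum_i Normc.normc (v i 0).

Lemma normc_coord_le_norm1 (v : 'cV[R[i]]_p) i : Normc.normc (v i 0) <= norm1 v.
Proof. by rewrite /norm1 (bigD1 i) //= lerDl sumr_ge0 // => j _; exact: normc_ge0. Qed.

Lemma norm1_mulmx (A : 'M[R[i]]_p) v :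
  norm1 (A *m v) <= (\sum_i \sum_j Normc.normc (A i j)) * norm1 v.
Proof.
rewrite /norm1 mulr_suml; apply: ler_sum => i _; rewrite mxE.
apply: le_trans (ler_normc_sum _ _ _) _; rewrite mulr_suml.
apply: ler_sum => j _; rewrite Normc.normcM.
by rewrite ler_wpM2l ?normc_ge0 ?normc_coord_le_norm1.
Qed.

Definition complexify (x : 'rV[R]_(p + p)) : 'cV[R[i]]_p :=
  \col_i (lsubmx x 0 i +i* rsubmx x 0 i).

Definition realify (v : 'cV[R[i]]_p) : 'rV[R]_(p + p) :=
  row_mx (\row_i complex.Re (v i 0)) (\row_i complex.Im (v i 0)).

Lemma realifyK : cancel realify complexify.
Proof.
move=> v; apply/matrixP => i j; rewrite /complexify /realify row_mxKl row_mxKr !mxE (ord1 j).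
by case: (v i 0).
Qed.

Lemma complexifyB x y : complexify (x - y) = complexify x - complexify y.
Proof. by apply/matrixP => i j; rewrite !mxE. Qed.

Lemma complexifyZ (t : R) x : complexify (t *: x) = t%:C *: complexify x.
Proof.
apply/matrixP => i j; rewrite !mxE.
by apply/eqP; rewrite eq_complex /= !mul0r subr0 addr0 !eqxx.
Qed.

Lemma complexify_eq0 x : (complexify x == 0) = (x == 0).
Proof.
apply/eqP/eqP => [x0|->]; last by apply/matrixP => i j; rewrite !mxE.
have [l0 r0] : lsubmx x = 0 /\ rsubmx x = 0.
  by split; apply/matrixP => i j; move/matrixP: x0 => /(_ j 0);
    rewrite !mxE (ord1 i) => -[].
by rewrite -[x]hsubmxK l0 r0 row_mx0.
Qed.

Lemma norm1_complexify_le x : norm1 (complexify x) <= p.*2%:R * `|x|.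
Proof.
rewrite mulr_natl -mul2n mulrnA /norm1 -[p in _ *+ p]card_ord -sumr_const.
apply: ler_sum => i _; rewrite mxE; apply: le_trans (normc_le_Re_Im _ _) _.
by rewrite mulr2n !mxE lerD // normr_entry_le.
Qed.

End OneNorm.

Section VectorNorm.
Variables (R : realType) (p : nat) (N : 'cV[R[i]]_p -> R).
Hypothesis N_norm : is_vec_norm N.

Lemma vnorm_ge0 v : 0 <= N v. Proof. by case: N_norm. Qed.

Lemma vnormZ c v : N (c *: v) = Normc.normc c * N v. Proof. by case: N_norm. Qed.

Lemma ler_vnormD u v : N (u + v) <= N u + N v. Proof. by case: N_norm. Qed.

Lemma vnorm_gt0 v : v != 0 -> 0 < N v.
Proof.
case: N_norm => _ N_eq0 _ _ v_neq0.
by rewrite lt_neqAle vnorm_ge0 andbT; apply: contra_neq v_neq0 => /esym/N_eq0.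
Qed.

Lemma vnorm0 : N 0 = 0.
Proof. by rewrite -(scale0r (0 : 'cV_p)) vnormZ Normc.normc0 mul0r. Qed.

Lemma vnormN v : N (- v) = N v.
Proof. by rewrite -scaleN1r vnormZ normcN Normc.normc1 mul1r. Qed.

Lemma ler_vnorm_sum (I : Type) (r : seq I) (P : pred I) (F : I -> 'cV[R[i]]_p) :
  N (\sum_(i <- r | P i) F i) <= \sum_(i <- r | P i) N (F i).
Proof.
elim/big_ind2: _ => [|x1 x2 y1 y2 le1 le2|//]; first by rewrite vnorm0.
exact: le_trans (ler_vnormD _ _) (lerD le1 le2).
Qed.

Lemma ler_vnorm_dist v w : `|N v - N w| <= N (v - w).
Proof.
rewrite ler_norml; apply/andP; split.
  rewrite lerBrDl lerBlDr -(vnormN (v - w)) opprB.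
  by apply: le_trans (ler_vnormD v (w - v)); rewrite addrC subrK.
by rewrite lerBlDl; apply: le_trans (ler_vnormD w (v - w)); rewrite addrC subrK.
Qed.

Lemma vnorm_le_norm1 : exists2 K, 0 <= K & forall v, N v <= K * norm1 v.
Proof.
exists (\sum_i N (delta_mx i 0)) => [|v]; first by rewrite sumr_ge0 // => i _; exact: vnorm_ge0.
have v_sum : v = \sum_i v i 0 *: delta_mx i 0.
  by rewrite {1}(matrix_sum_delta v); apply: eq_bigr => i _; rewrite big_ord1.
rewrite {1}v_sum; apply: le_trans (ler_vnorm_sum _ _ _) _.
rewrite mulr_suml; apply: ler_sum => i _.
by rewrite vnormZ mulrC; apply: ler_wpM2l; [exact: vnorm_ge0 | exact: normc_coord_le_norm1].
Qed.

Lemma continuous_vnorm_complexify : continuous (N \o @complexify R p).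
Proof.
have [K K_ge0 N_le] := vnorm_le_norm1.
apply: (@klipschitz_continuous _ _ _ (K * p.*2%:R)) => -[x y] _ /=.
apply: le_trans (ler_vnorm_dist _ _) _.
rewrite -complexifyB; apply: le_trans (N_le _) _.
rewrite -mulrA; apply: (ler_wpM2l K_ge0); exact: norm1_complexify_le.
Qed.

Lemma vnorm_ge_norm1 : (0 < p)%N -> exists2 c, 0 < c & forall v, c * norm1 v <= N v.
Proof.
move=> p_gt0; have pp_gt0 : (0 < p + p)%N by rewrite addn_gt0 p_gt0.
have [x0 /set_mem /= x0_unit x0_min] := compact_EVT_min
  (rV_unit_sphere_neq0 R pp_gt0) (@rV_unit_sphere_compact R (p + p))
  (continuous_subspaceT continuous_vnorm_complexify).
set c0 := N (complexify x0).
have c0_gt0 : 0 < c0.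
  apply: vnorm_gt0; rewrite complexify_eq0 -normr_eq0 x0_unit; exact: oner_neq0.
have c0_le v : c0 * `|realify v| <= N v.
  set x := realify v; have [->|x_neq0] := eqVneq x 0.
    by rewrite normr0 mulr0 vnorm_ge0.
  have x_gt0 : 0 < `|x| by rewrite normr_gt0.
  have -> : v = `|x|%:C *: complexify (`|x|^-1 *: x).
    by rewrite -complexifyZ scalerA divff ?gt_eqF // scale1r realifyK.
  rewrite vnormZ normc_real normr_id mulrC ler_pM2l //.
  by apply: x0_min; rewrite inE /= normrZ normrV ?unitfE ?gt_eqF // normr_id mulVf ?gt_eqF.
have p2_gt0 : 0 < p.*2%:R :> R by rewrite ltr0n double_gt0.
exists (c0 / p.*2%:R) => [|v]; first by rewrite divr_gt0.
apply: le_trans (c0_le v); rewrite -[in norm1 v](realifyK v).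
apply: le_trans (ler_wpM2l _ (norm1_complexify_le _)) _; first by rewrite ltW ?divr_gt0.
by rewrite mulrA divfK ?gt_eqF.
Qed.

(* [sup] of a set that is not bounded above is junk, hence [vnorm_ge_norm1]. *)
Lemma induced_norm_ub (A : 'M[R[i]]_p) v : (0 < p)%N ->
  N (A *m v) <= induced_norm N A * N v.
Proof.
move=> p_gt0; have [->|v_neq0] := eqVneq v 0; first by rewrite mulmx0 vnorm0 mulr0.
have [K K_ge0 N_le] := vnorm_le_norm1.
have [c c_gt0 N_ge] := vnorm_ge_norm1 p_gt0.
rewrite -ler_pdivrMr ?vnorm_gt0 //; apply: ub_le_sup; last by exists v.
exists (K * (\sum_i \sum_j Normc.normc (A i j)) / c) => _ [w /= w_neq0 <-].
rewrite ler_pdivrMr ?vnorm_gt0 //; apply: le_trans (N_le _) _.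
rewrite -!mulrA ler_wpM2l //; apply: le_trans (norm1_mulmx _ _) _.
apply: ler_wpM2l; first by do 2!(apply: sumr_ge0 => ? _); exact: normc_ge0.
by rewrite mulrC ler_pdivlMr // mulrC.
Qed.

End VectorNorm.

Section CosineBounds.
Variable R : realType.

Lemma cos_pi_div3 : cos (pi / 3%:R) = 2^-1 :> R.
Proof.
set t := pi / 3%:R : R.
have t_gt0 : 0 < t by rewrite divr_gt0 ?pi_gt0.
have cos_gt0 : 0 < cos t.
  apply: cos_gt0_pihalf; rewrite (lt_trans _ t_gt0) ?oppr_lt0 ?divr_gt0 ?pi_gt0 //=.
  by rewrite /t ltr_pM2l ?pi_gt0 // ltf_pV2 ?posrE // ltr_nat.
have double : cos (t *+ 2) = - cos t.
  by rewrite (_ : t *+ 2 = - t + pi) ?cosDpi ?cosN // /t; field.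
rewrite cos_mulr2n in double.
by apply/eqP; rewrite eq_le; apply/andP; split; nra.
Qed.

Lemma cos_ge_half (x : R) : 0 <= x <= pi / 3%:R -> 2^-1 <= cos x.
Proof.
case/andP => x_ge0 x_le; have pi_gt0 := @pi_gt0 R.
have third_ge0 : 0 <= pi / 3%:R :> R by rewrite divr_ge0 ?ltW.
have third_le : pi / 3%:R <= pi :> R by rewrite ler_pdivrMr ?ltr0n //; lra.
rewrite -cos_pi_div3 leNgt ltr_cos ?in_itv /= ?third_ge0 ?third_le ?x_ge0 -?leNgt //.
exact: le_trans third_le.
Qed.

Lemma pi_div_natr_le (k l : nat) : (0 < k <= l)%N -> pi / l%:R <= pi / k%:R :> R.
Proof.
case/andP => k_gt0 k_le; apply: ler_wpM2l; first exact/ltW/pi_gt0.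
by rewrite lef_pV2 ?posrE ?ltr0n ?ler_nat // (leq_trans k_gt0).
Qed.

Lemma pi_div_natr_ge0 (l : nat) : 0 <= pi / l%:R :> R.
Proof. by rewrite divr_ge0 // ltW // pi_gt0. Qed.

Lemma cos_pi_div_ge0 (m : nat) : (0 < m)%N -> 0 <= cos (pi / m.+1%:R) :> R.
Proof.
move=> m_gt0; apply: cos_ge0_pihalf; rewrite (@pi_div_natr_le 2 m.+1) // andbT.
by rewrite (le_trans _ (pi_div_natr_ge0 _)) // oppr_le0 (pi_div_natr_ge0 2).
Qed.

Lemma cos_pi_div_ge_half (m : nat) : (1 < m)%N -> 2^-1 <= cos (pi / m.+1%:R) :> R.
Proof.
move=> m_gt1; apply: cos_ge_half.
by rewrite pi_div_natr_ge0 (@pi_div_natr_le 3 m.+1).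
Qed.

End CosineBounds.

Lemma eigenvector_vnorm_le (R : realType) (p n : nat) (a : 'I_n -> R[i])
    (m : 'I_n -> nat) (C0 : 'M[R[i]]_p)
    (B : forall j : 'I_n, 'I_(m j) -> 'M[R[i]]_p)
    (N : 'cV[R[i]]_p -> R) (l0 : R[i]) (v : 'cV[R[i]]_p) :
  (0 < p)%N -> is_vec_norm N -> Rfun a C0 B l0 *m v = 0 ->
  Normc.normc l0 * N v <= induced_norm N C0 * N v +
    \sum_j \sum_(k < m j) induced_norm N (B j k) *
      (N v / Normc.normc (l0 - a j) ^+ k.+1).
Proof.
move=> p_gt0 N_norm Rv0.
set S := \sum_(j < n) \sum_(k < m j) (l0 - a j) ^- k.+1 *: B j k.
have l0v : l0 *: v = C0 *m v - S *m v.
  apply/eqP; rewrite -subr_eq0 -Rv0 /Rfun mulmxDl mulmxBl mul_scalar_mx.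
  by rewrite opprB addrA addrAC.
rewrite -(vnormZ N_norm) l0v; apply: le_trans (ler_vnormD N_norm _ _) _.
rewrite (vnormN N_norm) lerD ?induced_norm_ub //.
rewrite /S !mulmx_suml; apply: le_trans (ler_vnorm_sum N_norm _ _ _) _.
apply: ler_sum => j _; rewrite mulmx_suml; apply: le_trans (ler_vnorm_sum N_norm _ _ _) _.
apply: ler_sum => k _; rewrite -scalemxAl (vnormZ N_norm).
rewrite Normc.normcV normcX mulrC mulrA ler_wpM2r ?induced_norm_ub //.
by rewrite invr_ge0 exprn_ge0 // normc_ge0.
Qed.

Local Close Scope classical_set_scope.
Local Close Scope complex_scope.

Theorem corollary3p11 (R : realType) (p n : nat) (a : 'I_n -> R[i])
  (m : 'I_n -> nat) (C0 : 'M[R[i]]_p)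
  (B : forall j : 'I_n, 'I_(m j) -> 'M[R[i]]_p)
  (N : 'cV[R[i]]_p -> R) (l0 : R[i]) :
  (0 < p)%N -> (0 < n)%N -> injective a -> (forall j, (0 < m j)%N) ->
  is_vec_norm N ->
  is_eigenvalue a C0 B l0 ->
  Normc.normc l0 <=
    \big[Num.max/induced_norm N C0]_(j < n)
       (Normc.normc (a j) + cos (pi / (m j).+1%:R))
    + 2^-1 * (Num.sqrt ((\sum_(j < n) m j)%N)%:R
              + Num.sqrt (\sum_(j < n) \sum_(k < m j) induced_norm N (B j k) ^+ 2)).
Proof.
(* The poles need not be distinct: each one is handled on its own. *)
move=> p_gt0 n_gt0 _ m_gt0 N_norm [l0_pole [v [v_neq0 Rv0]]].
apply: (resolvent_ineq_bound (alpha := fun j => Normc.normc (a j))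
  (d := fun j => Normc.normc (l0 - a j)) (kap := fun j => cos (pi / (m j).+1%:R))
  _ _ (vnorm_gt0 N_norm v_neq0)) (eigenvector_vnorm_le p_gt0 N_norm Rv0) => //.
- move=> j; rewrite lt_neqAle normc_ge0 andbT eq_sym.
  by apply: contra (l0_pole j) => /eqP/Normc.eq0_normc/eqP; rewrite subr_eq0.
- by move=> j; rewrite -{1}(subrK (a j) l0) addrC le_normcD.
- by move=> j; exact: cos_pi_div_ge0.
- by move=> j; exact: cos_pi_div_ge_half.
- exact: bigmax_ge_id.
- by move=> j; exact: le_bigmax.
Qed.
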